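(* Every LCS-complete space is completely Baire, i.e. every closed subspace of it is a Baire space. In particular every LCS-complete space is Baire.
   Context: A Baire space is a space in which every intersection of countably many dense open subsets is dense. A space is LCS-complete if it is homeomorphic to a $G_\delta$ subset (countable intersection of open sets), with the subspace topology, of some locally compact sober space, locally compact meaning every point has a neighborhood base of compact saturated sets. *)

From Stdlib Require Import List.

Set Implicit Arguments.

Definition topology (X : Type) := (X -> Prop) -> Prop.

Definition is_topology (X : Type) (T : topology X) : Prop :=
  T (fun _ => True) /\
  (forall U V, T U -> T V -> T (fun x => U x /\ V x)) /\
  (forall F : (X -> Prop) -> Prop, (forall U, F U -> T U) ->
     T (fun x => exists U, F U /\ U x)).

Definition closed (X : Type) (T : topology X) (C : X -> Prop) : Prop :=
  T (fun x => ~ C x).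

Definition subspace (X : Type) (T : topology X) (A : X -> Prop) : topology {x | A x} :=
  fun V => exists W, T W /\ forall z : {x | A x}, V z <-> W (proj1_sig z).

Definition dense (X : Type) (T : topology X) (D : X -> Prop) : Prop :=
  forall U, T U -> (exists x, U x) -> exists x, U x /\ D x.

Definition Baire (X : Type) (T : topology X) : Prop :=
  forall U : nat -> X -> Prop,
    (forall n, T (U n) /\ dense T (U n)) ->
    dense T (fun x => forall n, U n x).

Definition completely_Baire (X : Type) (T : topology X) : Prop :=
  forall C : X -> Prop, closed T C -> Baire (subspace T C).

Definition compact (X : Type) (T : topology X) (K : X -> Prop) : Prop :=
  forall F : (X -> Prop) -> Prop,
    (forall U, F U -> T U) ->
    (forall x, K x -> exists U, F U /\ U x) ->
    exists l : list (X -> Prop),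
      (forall U, In U l -> F U) /\ (forall x, K x -> exists U, In U l /\ U x).

Definition saturated (X : Type) (T : topology X) (Q : X -> Prop) : Prop :=
  forall x, (forall U, T U -> (forall y, Q y -> U y) -> U x) -> Q x.

Definition locally_compact (X : Type) (T : topology X) : Prop :=
  forall x U, T U -> U x ->
    exists Q : X -> Prop,
      compact T Q /\ saturated T Q /\
      (exists V, T V /\ V x /\ forall y, V y -> Q y) /\
      (forall y, Q y -> U y).

Definition closure1 (X : Type) (T : topology X) (x : X) : X -> Prop :=
  fun y => forall U, T U -> U y -> U x.

Definition irreducible_closed (X : Type) (T : topology X) (F : X -> Prop) : Prop :=
  closed T F /\ (exists x, F x) /\
  forall F1 F2, closed T F1 -> closed T F2 ->
    (forall x, F x -> F1 x \/ F2 x) ->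
    (forall x, F x -> F1 x) \/ (forall x, F x -> F2 x).

Definition sober (X : Type) (T : topology X) : Prop :=
  forall F, irreducible_closed T F ->
    exists! x, forall y, F y <-> closure1 T x y.

Definition G_delta (X : Type) (T : topology X) (A : X -> Prop) : Prop :=
  exists U : nat -> X -> Prop, (forall n, T (U n)) /\
    forall x, A x <-> (forall n, U n x).

Definition homeomorphic (X Y : Type) (TX : topology X) (TY : topology Y) : Prop :=
  exists (f : X -> Y) (g : Y -> X),
    (forall x, g (f x) = x) /\ (forall y, f (g y) = y) /\
    (forall W, TY W -> TX (fun x => W (f x))) /\
    (forall V, TX V -> TY (fun y => V (g y))).

Definition LCS_complete (X : Type) (T : topology X) : Prop :=
  exists (Y : Type) (TY : topology Y) (A : Y -> Prop),
    is_topology TY /\ locally_compact TY /\ sober TY /\ G_delta TY A /\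
    homeomorphic T (subspace TY A).

From Stdlib Require List.
From mathcomp Require Import ssreflect ssrfun ssrbool ssrnat boolp classical_sets.

Set Implicit Arguments.
Unset Strict Implicit.
Unset Printing Implicit Defensive.

Local Open Scope classical_set_scope.

(* Let X be a G_delta subset A of a locally compact sober space Y, and F a
   closed subset of Y.  Given open sets W_n dense in F `&` A and an open U
   meeting F `&` A, local compactness yields a decreasing sequence of compact
   saturated sets Q_n meeting F `&` A, with Q_0 inside U and Q_n inside W_n
   and the n-th open set defining A.  Compactness and sobriety then force F to
   meet the intersection of the Q_n: an open set O maximal (by Zorn's lemma)
   among those that leave a point of F in every Q_n has an irreducible
   complement, whose generic point lies in F and, the Q_n being saturated, in
   every Q_n.  Hence F `&` A is a Baire space; closed subspaces of X are of
   this form up to homeomorphism. *)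

Section OpenSets.
Variables (Y : Type) (T : topology Y).
Hypothesis HT : is_topology T.

Lemma open_eq (U V : set Y) : T U -> U = V -> T V.
Proof. by move=> + <-. Qed.

Lemma open_setI (U V : set Y) : T U -> T V -> T (U `&` V).
Proof. by case: HT => _ [+ _]; apply. Qed.

Lemma open_bigcup (F : set (set Y)) : F `<=` T -> T (\bigcup_(U in F) U).
Proof.
move=> FT; case: HT => _ [_ /(_ F FT) /open_eq]; apply.
by apply/seteqP; split=> [x [U [FU Ux]]|x [U FU Ux]]; exists U.
Qed.

Lemma open_setU (U V : set Y) : T U -> T V -> T (U `|` V).
Proof.
move=> TU TV; apply: (@open_eq (\bigcup_(W in [set W | W = U \/ W = V]) W)).
  by apply: open_bigcup => W [-> | ->].
apply/seteqP; split=> [x [W [-> | ->] Wx]|x [Ux|Vx]]; [by left|by right|..].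
  by exists U; [left|].
by exists V; [right|].
Qed.

Lemma open0 : T set0.
Proof.
apply: (@open_eq (\bigcup_(U in set0) U)); first exact: open_bigcup.
by apply/seteqP; split=> x // [].
Qed.

Lemma closedC (U : set Y) : T U -> closed T (~` U).
Proof. by move=> TU; rewrite /closed (_ : (fun x => _) = ~` ~` U) // setCK. Qed.

Lemma closedT : closed T setT.
Proof. by rewrite -setC0; apply: closedC; apply: open0. Qed.

End OpenSets.

Lemma chain_list_ub (A : Type) (C : set (set A)) (l : list (set A)) :
  total_on C subset ->
  (forall U, List.In U l -> ~ C U) \/
  exists2 M, C M & forall U, List.In U l -> C U -> U `<=` M.
Proof.
move=> Ctot; elim: l => [|U l [noC|[M CM ubM]]]; first by left.
- have [CU|nCU] := pselect (C U); last by left=> V [<-|/noC].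
  by right; exists U => // V [<-|/noC nCV /nCV] // _ x.
- right; have [CU|nCU] := pselect (C U); last first.
    by exists M => // V [<-|/ubM] //.
  have [UM|MU] := Ctot _ _ CU CM; first by exists M => // V [<-|/ubM].
  by exists U => // V [<- _ x|/ubM lV /lV VM x /VM /MU].
Qed.

Lemma compact_closed_chain_cover (Y : Type) (T : topology Y)
    (K F : set Y) (C : set (set Y)) :
  compact T K -> closed T F -> C `<=` T -> total_on C subset ->
  K `&` F !=set0 -> K `&` F `<=` \bigcup_(U in C) U ->
  exists2 U, C U & K `&` F `<=` U.
Proof.
move=> Kc Fc CT Ctot [y0 KFy0] KFC.
have [l [lcov Kl]] : exists l : list (set Y),
    (forall U, List.In U l -> C U \/ U = ~` F) /\
    forall x, K x -> exists U, List.In U l /\ U x.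
  apply: (Kc [set U | C U \/ U = ~` F]) => [U [/CT //| ->] //|x Kx].
  have [Fx|nFx] := pselect (F x); last by exists (~` F); split; [right|].
  by have [U CU Ux] := KFC x (conj Kx Fx); exists U; split; [left|].
have [noC|[M CM ubM]] := chain_list_ub l Ctot.
  have [U [lU Uy0]] := Kl y0 KFy0.1.
  by case: (lcov U lU) => [/(noC U lU)//| UF]; move: Uy0; rewrite UF => /(_ KFy0.2).
exists M => // x [Kx Fx]; have [U [lU Ux]] := Kl x Kx.
by case: (lcov U lU) => [CU| UF]; [exact: ubM Ux|move: Ux; rewrite UF].
Qed.

Section NestedCompactSaturated.
Variables (Y : Type) (T : topology Y) (F : set Y) (Q : nat -> set Y).
Hypotheses (HT : is_topology T) (Tsober : sober T) (Fclosed : closed T F).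
Hypotheses (Qcompact : forall n, compact T (Q n)) (Qsat : forall n, saturated T (Q n)).
Hypotheses (Qanti : forall m n, m <= n -> Q n `<=` Q m) (QF : forall n, Q n `&` F !=set0).

Definition spares (O : set Y) := T O /\ forall n, (Q n `&` F) `\` O !=set0.

Lemma spares_bigcup_chain (G : set (set Y)) :
  G `<=` spares -> total_on G subset -> spares (\bigcup_(O in G) O).
Proof.
move=> Gsp Gtot; split; first by apply: open_bigcup => // O /Gsp [].
move=> n; apply: contrapT => noPt.
have cov : Q n `&` F `<=` \bigcup_(O in G) O.
  by move=> x QFx; apply: contrapT => nx; apply: noPt; exists x.
have [O GO QFO] := compact_closed_chain_cover (@Qcompact n) Fclosed
  (fun O GO => (Gsp O GO).1) Gtot (@QF n) cov.
by have [x [QFx]] := (Gsp O GO).2 n; apply; apply: QFO.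
Qed.

Section MaximalSparingOpen.
Variable O : set Y.
Hypotheses (Ospares : spares O) (Omax : forall B, O `<` B -> ~ spares B).

Lemma maximal_spares_sub (B : set Y) : spares B -> O `<=` B -> B `<=` O.
Proof. by move=> spB OB; apply: contrapT => nBO; apply: (Omax (conj OB nBO)). Qed.

Lemma setCF_sub_maximal_spares : ~` F `<=` O.
Proof.
have spB : spares (O `|` ~` F).
  split; first exact: open_setU Ospares.1 Fclosed.
  move=> n; have [x [[Qx Fx] nOx]] := Ospares.2 n.
  by exists x; split=> // -[].
by move=> x nFx; apply: (maximal_spares_sub spB (@subsetUl _ O _)); right.
Qed.

Lemma maximal_spares_escape (F1 : set Y) :
  closed T F1 -> ~ (~` O `<=` F1) -> exists n, (Q n `&` F) `\` O `<=` ~` F1.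
Proof.
move=> F1closed nsub.
have nsp : ~ spares (O `|` ~` F1).
  move=> sp; apply: nsub => x nOx; apply: contrapT => nF1x; apply: nOx.
  exact: (maximal_spares_sub sp (@subsetUl _ O (~` F1))) (or_intror nF1x).
apply: contrapT => noEscape; apply: nsp.
split; first exact: open_setU Ospares.1 F1closed.
move=> n; apply: contrapT => empty; apply: noEscape; exists n.
by move=> x [[Qx Fx] nOx] F1x; apply: empty; exists x; split=> // -[].
Qed.

Lemma maximal_spares_irreducible : irreducible_closed T (~` O).
Proof.
split; first exact: closedC Ospares.1.
split; first by have [x [_ nOx]] := Ospares.2 0; exists x.
move=> F1 F2 F1closed F2closed cov; apply: contrapT => /not_orP[nF1 nF2].
have [n1 esc1] := maximal_spares_escape F1closed nF1.
have [n2 esc2] := maximal_spares_escape F2closed nF2.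
have [x [[Qx Fx] nOx]] := Ospares.2 (maxn n1 n2).
have Qx1 := Qanti (leq_maxl n1 n2) Qx; have Qx2 := Qanti (leq_maxr n1 n2) Qx.
by case: (cov x nOx); [apply: esc1|apply: esc2].
Qed.

End MaximalSparingOpen.

Lemma sober_nested_compact_saturated_meet : exists x, F x /\ forall n, Q n x.
Proof.
have [O [Osp Omax]] := Zorn_bigcup spares_bigcup_chain.
have [x [Ox _]] := Tsober (maximal_spares_irreducible Osp Omax).
exists x; split.
  apply: contrapT => nFx; have /Ox nOx : closure1 T x x by [].
  exact: nOx (setCF_sub_maximal_spares Osp Omax nFx).
move=> n; apply: Qsat => U TU QU.
have [y [[Qy Fy] nOy]] := Osp.2 n.
exact: (Ox y).1 nOy U TU (QU y Qy).
Qed.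

End NestedCompactSaturated.

(* Density and the Baire property of the subspace B, expressed in the ambient
   space. *)
Definition dense_in (Y : Type) (T : topology Y) (B W : set Y) :=
  forall O, T O -> O `&` B !=set0 -> O `&` B `&` W !=set0.

Definition Baire_in (Y : Type) (T : topology Y) (B : set Y) :=
  forall W : nat -> set Y, (forall n, T (W n) /\ dense_in T B (W n)) ->
  dense_in T B (\bigcap_n W n).

Lemma locally_compact_shrink (Y : Type) (T : topology Y) (B O W : set Y) :
  is_topology T -> locally_compact T -> T O -> O `&` B !=set0 ->
  T W -> dense_in T B W ->
  exists V K, [/\ T V, V `&` B !=set0, compact T K, saturated T K &
                  V `<=` K /\ K `<=` O `&` W].
Proof.
move=> HT Tlc TO OB TW Wdense.
have [y [[Oy By] Wy]] := Wdense O TO OB.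
have [K [Kc [Ks [[V [TV [Vy VK]]] KOW]]]] :=
  Tlc y _ (open_setI HT TO TW) (conj Oy Wy).
by exists V, K; split=> //; exists y.
Qed.

Lemma dependent_choice (A : Type) (P : A -> Prop) (R : nat -> A -> A -> Prop)
    (a0 : A) :
  P a0 -> (forall n a, P a -> exists2 b, P b & R n a b) ->
  exists s : nat -> A, s 0 = a0 /\ forall n, P (s n) /\ R n (s n) (s n.+1).
Proof.
move=> Pa0 step.
have /choice[f Hf] :
    forall na : nat * A, exists b, P na.2 -> P b /\ R na.1 na.2 b.
  move=> [n a]; have [Pa|nPa] := pselect (P a); last by exists a.
  by have [b Pb Rb] := step n a Pa; exists b.
pose s := fix s n := if n is m.+1 then f (m, s m) else a0.
have Ps n : P (s n) by elim: n => //= n /(Hf (n, _)) [].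
by exists s; split=> // n; split=> //; exact: (Hf (n, s n) (Ps n)).2.
Qed.

Lemma locally_compact_nested_seq (Y : Type) (T : topology Y) (B U : set Y)
    (W : nat -> set Y) :
  is_topology T -> locally_compact T ->
  (forall n, T (W n) /\ dense_in T B (W n)) -> T U -> U `&` B !=set0 ->
  exists K : nat -> set Y,
    [/\ forall n, compact T (K n) /\ saturated T (K n),
        forall m n, m <= n -> K n `<=` K m,
        forall n, K n `&` B !=set0, K 0 `<=` U & forall n, K n `<=` W n].
Proof.
move=> HT Tlc Wdense TU UB.
(* The n-th state is the pair (K_(n-1), V_n) of a compact saturated set and an
   open set inside it; the first component of the initial state is a dummy. *)
pose P (p : set Y * set Y) := T p.2 /\ p.2 `&` B !=set0.
pose R n (p q : set Y * set Y) := [/\ compact T q.1, saturated T q.1,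
  q.2 `<=` q.1 & q.1 `<=` p.2 `&` W n].
have [s [s0 sPR]] : exists s : nat -> set Y * set Y,
    s 0 = (U, U) /\ forall n, P (s n) /\ R n (s n) (s n.+1).
  apply: dependent_choice => // n [Kprev V] [TV VB].
  have [V' [K [TV' V'B Kc Ks [V'K KVW]]]] :=
    locally_compact_shrink HT Tlc TV VB (Wdense n).1 (Wdense n).2.
  by exists (K, V').
pose K n := (s n.+1).1.
have Kdec n : K n.+1 `<=` K n.
  have [_ [_ _ _ KVW]] := sPR n.+1; have [_ [_ _ VK _]] := sPR n.
  by move=> x /KVW [Vx _]; apply: VK.
exists K; split.
- by move=> n; have [_ []] := sPR n.
- move=> m n mn; rewrite -(subnK mn); elim: (n - m) => [|k IH] //=.
  exact: subset_trans (Kdec _) IH.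
- move=> n; have [[_ [x [Vx Bx]]] _] := sPR n.+1.
  have [_ [_ _ VK _]] := sPR n.
  by exists x; split=> //; apply: VK.
- by have [_ [_ _ _]] := sPR 0; rewrite s0 => KUW x /KUW [].
- by move=> n; have [_ [_ _ _ KVW]] := sPR n => x /KVW [].
Qed.

Lemma locally_compact_sober_Baire_in (Y : Type) (T : topology Y) (F : set Y)
    (G : nat -> set Y) :
  is_topology T -> locally_compact T -> sober T -> closed T F ->
  (forall n, T (G n)) -> Baire_in T (F `&` \bigcap_n G n).
Proof.
move=> HT Tlc Tsober Fclosed Gopen W Wdense U TU UB.
have WGdense n :
    T (W n `&` G n) /\ dense_in T (F `&` \bigcap_n G n) (W n `&` G n).
  split; first exact: (open_setI HT (Wdense n).1 (Gopen n)).
  move=> O TO OB; have [x [[Ox Bx] Wx]] := (Wdense n).2 O TO OB.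
  by exists x; split=> //; split=> //; apply: Bx.2.
have [K [Kcs Kanti KB K0 KWG]] :=
  locally_compact_nested_seq HT Tlc WGdense TU UB.
have KF n : K n `&` F !=set0 by have [x [Kx [Fx _]]] := KB n; exists x.
have [x [Fx Kx]] := sober_nested_compact_saturated_meet HT Tsober Fclosed
  (fun n => (Kcs n).1) (fun n => (Kcs n).2) Kanti KF.
exists x; split; first split.
- exact: K0 (Kx 0).
- by split=> // n _; have [] := KWG n x (Kx n).
- by move=> n _; have [] := KWG n x (Kx n).
Qed.

Lemma Baire_in_subspace (Y : Type) (T : topology Y) (A D : set Y) :
  Baire_in T (A `&` D) ->
  Baire_in (subspace T A) (fun z => D (proj1_sig z)).
Proof.
move=> BaireAD W Wdense O [O' [TO' OO']] [z0 [Oz0 Dz0]].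
have /choice[W' W'W] := fun n => (Wdense n).1.
have W'dense n : T (W' n) /\ dense_in T (A `&` D) (W' n).
  split; first exact: (W'W n).1.
  move=> U TU [y [Uy [Ay Dy]]].
  have Uopen : subspace T A (fun z => U (proj1_sig z)) by exists U; split.
  have [[x Ax] [[Ux Dx] Wx]] :=
    (Wdense n).2 _ Uopen (ex_intro _ (exist _ y Ay) (conj Uy Dy)).
  exists x; split; first by split; [|split].
  exact: ((W'W n).2 (exist _ x Ax)).1 Wx.
have O'AD : O' `&` (A `&` D) !=set0.
  by exists (proj1_sig z0); split; [apply/(OO' z0)|split=> //; apply: proj2_sig].
have [y [[O'y [Ay Dy]] W'y]] := BaireAD W' W'dense O' TO' O'AD.
exists (exist _ y Ay); split; first by split=> //; apply/(OO' (exist _ y Ay)).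
by move=> n _; apply/((W'W n).2 (exist _ y Ay))/W'y.
Qed.

Lemma Baire_in_homeomorphic (X Z : Type) (TX : topology X) (TZ : topology Z)
    (f : X -> Z) (g : Z -> X) (D : set Z) :
  cancel f g -> cancel g f ->
  (forall W, TZ W -> TX (W \o f)) -> (forall V, TX V -> TZ (V \o g)) ->
  Baire_in TZ D -> Baire_in TX (D \o f).
Proof.
move=> fK gK fcont gcont BaireD W Wdense O TO [x [Ox Dfx]].
have W'dense n : TZ (W n \o g) /\ dense_in TZ D (W n \o g).
  split; first exact: gcont (Wdense n).1.
  move=> U TU [z [Uz Dz]].
  have UfDf : (U \o f) `&` (D \o f) !=set0 by exists (g z); rewrite /= gK.
  have [x' [[Ux' Dx'] Wx']] := (Wdense n).2 (U \o f) (fcont U TU) UfDf.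
  by exists (f x'); rewrite /= fK.
have OgD : (O \o g) `&` D !=set0 by exists (f x); rewrite /= fK.
have [z [[Oz Dz] Wz]] := BaireD _ W'dense (O \o g) (gcont O TO) OgD.
by exists (g z); rewrite /= gK.
Qed.

Lemma closed_subspace_trace (Y : Type) (T : topology Y) (A : set Y)
    (C : set {x | A x}) :
  closed (subspace T A) C ->
  exists2 F, closed T F & C = (fun z => F (proj1_sig z)).
Proof.
move=> [W [TW CW]]; exists (~` W); first exact: closedC.
apply/funext => z; apply/propext; split=> [Cz /(CW z).2 //|nWz].
by apply: contrapT => nCz; apply/nWz/(CW z).1.
Qed.

Lemma LCS_complete_closed_Baire_in (X : Type) (T : topology X) (C : set X) :
  LCS_complete T -> closed T C -> Baire_in T C.
Proof.
move=> [Y [TY [A [HTY [Ylc [Ysober [[G [Gopen AG]] hom]]]]]]] Cclosed.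
have [f [g [fK [gK [fcont gcont]]]]] := hom.
have [F Fclosed CgF] := closed_subspace_trace (gcont _ Cclosed).
have -> : C = (fun z => F (proj1_sig z)) \o f.
  by rewrite -CgF; apply/funext => x /=; rewrite fK.
apply: Baire_in_homeomorphic fK gK fcont gcont _; apply: Baire_in_subspace.
have -> : A `&` F = F `&` \bigcap_n G n.
  rewrite setIC; congr (_ `&` _); apply/seteqP.
  by split=> [y /AG Gy n _|y Gy]; [apply: Gy|apply/AG => n; apply: Gy].
exact: locally_compact_sober_Baire_in HTY Ylc Ysober Fclosed Gopen.
Qed.

Lemma Baire_in_setT (X : Type) (T : topology X) : Baire_in T setT -> Baire T.
Proof.
move=> BaireT U Udense O TO [x Ox].
have UdenseT n : T (U n) /\ dense_in T setT (U n).
  split; first exact: (Udense n).1.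
  move=> V TV [y [Vy _]].
  by have [z [Vz Uz]] := (Udense n).2 V TV (ex_intro _ y Vy); exists z.
have OT : O `&` setT !=set0 by exists x.
have [y [[Oy _] Uy]] := BaireT U UdenseT O TO OT.
by exists y; split=> // n; apply: Uy.
Qed.

Lemma Baire_in_Baire_subspace (X : Type) (T : topology X) (C : set X) :
  Baire_in T C -> Baire (subspace T C).
Proof.
move=> BaireC; apply: Baire_in_setT.
by apply: (Baire_in_subspace (D := setT)); rewrite setIT.
Qed.

Theorem corollary10p4 (X : Type) (T : topology X) :
  is_topology T -> LCS_complete T -> completely_Baire T /\ Baire T.
Proof.
move=> HT TLCS; have BaireC C := @LCS_complete_closed_Baire_in X T C TLCS.
split; first by move=> C /BaireC /Baire_in_Baire_subspace.
exact: Baire_in_setT (BaireC _ (closedT HT)).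
Qed.
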